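(* Let $q$ be a power of $2$, let $\alpha\in\mathbb{F}_q$ be such that $x^2+x+\alpha$ is irreducible over $\mathbb{F}_q$, and let $\beta\in\{0,\alpha\}$. Let $V$ be the $4$-dimensional symplectic space and $u=V_\beta(4)$ the linear map described in the context. Suppose $v\in V$ satisfies $v(u-1)^3\neq0$ and $(v(u-1),v(u-1)^2)\neq0$. Write $v_i=v(u-1)^{i-1}$ for $1\le i\le4$, and set $\lambda=(v_2,v_3)$ and $\mu=(v_1,v_2)$. Then $\beta=\alpha$ if and only if $x^2+x+\lambda^{-1}\mu$ is irreducible over $\mathbb{F}_q$.
   Context: $V$ has basis $e_{-3},e_{-1},e_1,e_3$ with symplectic form $(\,,\,)$ given by $(e_{-3},e_3)=(e_3,e_{-3})=1$, $(e_{-1},e_1)=(e_1,e_{-1})=1$, and all other values on pairs of basis vectors $0$. Vectors are acted on from the right. $V_\beta(4)$ is the linear map $e_{-3}\mapsto e_{-3}+e_{-1}+e_1+\beta e_3$, $e_{-1}\mapsto e_{-1}+e_1$, $e_1\mapsto e_1+e_3$, $e_3\mapsto e_3$; it preserves the symplectic form. *)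

From HB Require Import structures.
From mathcomp Require Import all_boot all_order all_algebra.
Set Implicit Arguments. Unset Strict Implicit. Unset Printing Implicit Defensive.
Import Order.TTheory GRing.Theory.
Local Open Scope ring_scope.

(* V = 'rV[F]_4 ; coordinate indices 0,1,2,3 correspond to the basis
   e_{-3}, e_{-1}, e_1, e_3.  Vectors are row vectors acted on from the right. *)

Definition sympJ (F : fieldType) : 'M[F]_4 :=
  \matrix_(i < 4, j < 4) (if (i + j == 3)%N then 1 else 0).

Definition sympform (F : fieldType) (x y : 'rV[F]_4) : F :=
  (x *m sympJ F *m y^T) ord0 ord0.

(* V_beta(4): row i is the image of the i-th basis vector. *)
Definition Vbeta4 (F : fieldType) (beta : F) : 'M[F]_4 :=
  \matrix_(i < 4, j < 4)
    nth 0 (nth [::] [:: [:: 1; 1; 1; beta];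
                        [:: 0; 1; 1; 0];
                        [:: 0; 0; 1; 1];
                        [:: 0; 0; 0; 1]] i) j.

(* In coordinates, [v = (a, b, c, d)] gives [lambda = a^2] and, in characteristic 2,
   [mu = beta a^2 + a b + b^2].  So [lambda^-1 mu = beta + t + t^2] with [t = b/a], and
   the Artin-Schreier substitution [x |-> x + t] identifies the roots of
   [X^2 + X + lambda^-1 mu] with those of [X^2 + X + beta].  A quadratic is irreducible
   iff it has no root; [X^2 + X] has the root 0, while [X^2 + X + alpha] is irreducible. *)
From HB Require Import structures.
From mathcomp Require Import all_boot all_order all_algebra all_field.
From mathcomp Require Import ring.
Import GRing.Theory.
Local Open Scope ring_scope.

Local Notation AS c := ('X^2 + 'X + (c)%:P).

Section ArtinSchreier.

Variable R : comNzRingType.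

Lemma size_AS (c : R) : size (AS c) = 3%N.
Proof. by rewrite -addrA size_polyDl ?size_polyXn // size_XaddC. Qed.

Lemma root_AS0 : root (AS (0 : R)) 0.
Proof. by rewrite /root !hornerE expr2 mul0r. Qed.

Hypothesis R2 : 2 \in [pchar R].

Lemma root_AS_shift (c t x : R) : root (AS (c + t + t ^+ 2)) x = root (AS c) (x + t).
Proof.
rewrite /root !(hornerD, hornerXn, hornerX, hornerC); congr (_ == 0).
by rewrite -[LHS]addr0 -(addrr_pchar2 R2 (x * t)); ring.
Qed.

End ArtinSchreier.

Section QuadraticIrreducible.

Variable F : fieldType.

Lemma irreducible_AS (c : F) : irreducible_poly (AS c) <-> forall x, ~~ root (AS c) x.
Proof.
split=> [[_ irr] x | noroot]; last by apply: cubic_irreducible noroot; rewrite size_AS.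
apply/negP; rewrite root_factor_theorem => dvd_x.
have := irr ('X - x%:P); rewrite size_XsubC => /(_ isT dvd_x) /eqp_size.
by rewrite size_XsubC size_AS.
Qed.

Lemma reducible_AS0 : ~ irreducible_poly (AS (0 : F)).
Proof. by move=> /irreducible_AS /(_ 0); rewrite root_AS0. Qed.

Lemma irreducible_AS_shift (c t : F) : 2 \in [pchar F] ->
  irreducible_poly (AS (c + t + t ^+ 2)) <-> irreducible_poly (AS c).
Proof.
move=> F2; rewrite !irreducible_AS; split=> noroot x.
  by rewrite -(subrK t x) -root_AS_shift.
by rewrite root_AS_shift.
Qed.

End QuadraticIrreducible.

Section Vbeta4.

Variables (F : fieldType) (beta : F).

Definition row4 (a b c d : F) : 'rV[F]_4 := \row_(j < 4) nth 0 [:: a; b; c; d] j.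

Lemma row4_eta (v : 'rV[F]_4) : v = row4 (v 0 0) (v 0 1) (v 0 2) (v 0 3).
Proof.
by apply/rowP => -[[|[|[|[|j]]]] lt_j4] //; rewrite mxE; congr (v _ _); apply: val_inj.
Qed.

Lemma row4_mul_Vbeta4_sub1 (a b c d : F) :
  row4 a b c d *m (Vbeta4 beta - 1) = row4 0 a (a + b) (a * beta + c).
Proof.
apply/rowP => j; rewrite !mxE !big_ord_recr big_ord0 /= !mxE /=.
by case: j => [[|[|[|[|?]]]] //= ?]; rewrite -?val_eqE /=; ring.
Qed.

Lemma sympform_row4 (a b c d a' b' c' d' : F) :
  sympform (row4 a b c d) (row4 a' b' c' d') = a * d' + b * c' + c * b' + d * a'.
Proof.
rewrite /sympform !mxE !big_ord_recr big_ord0 /= !mxE.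
by rewrite !big_ord_recr !big_ord0 /= !mxE /=; ring.
Qed.

Let N := Vbeta4 beta - 1.

Lemma sympform_Vbeta4_v2v3 (v : 'rV[F]_4) : sympform (v *m N) (v *m N ^+ 2) = v 0 0 ^+ 2.
Proof.
by rewrite [v]row4_eta expr2 -mulmxE mulmxA !row4_mul_Vbeta4_sub1 sympform_row4 !mxE /=; ring.
Qed.

Lemma sympform_Vbeta4_v1v2 (v : 'rV[F]_4) : 2 \in [pchar F] ->
  sympform v (v *m N) = beta * v 0 0 ^+ 2 + v 0 0 * v 0 1 + v 0 1 ^+ 2.
Proof.
move=> F2; rewrite [v]row4_eta row4_mul_Vbeta4_sub1 sympform_row4 !mxE /=.
by rewrite mulr0 addr0 -[RHS]addr0 -(addrr_pchar2 F2 (v 0 0 * v 0 2)); ring.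
Qed.

End Vbeta4.

Theorem lemma5p3p3 (F : finFieldType) (k : nat) (hq : #|F| = (2 ^ k)%N)
  (alpha beta : F)
  (halpha : irreducible_poly ('X^2 + 'X + alpha%:P))
  (hbeta : beta = 0 \/ beta = alpha)
  (v : 'rV[F]_4) :
  let N := Vbeta4 beta - 1 in
  v *m N ^+ 3 != 0 ->
  sympform (v *m N) (v *m N ^+ 2) != 0 ->
  let v1 := v in let v2 := v *m N in let v3 := v *m N ^+ 2 in
  let lambda := sympform v2 v3 in
  let mu := sympform v1 v2 in
  beta = alpha <-> irreducible_poly ('X^2 + 'X + (lambda^-1 * mu)%:P).
Proof.
have F2 : 2 \in [pchar F] := card_finPcharP hq (isT : prime 2).
(* [v N^3 = (0, 0, 0, v 0 0)], so the first hypothesis follows from the second. *)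
move=> N _ + v1 v2 v3 lambda mu; rewrite sympform_Vbeta4_v2v3 => a2_neq0.
have -> : lambda^-1 * mu = beta + v 0 1 / v 0 0 + (v 0 1 / v 0 0) ^+ 2.
  rewrite /lambda /mu sympform_Vbeta4_v2v3 sympform_Vbeta4_v1v2 //.
  by field; apply: contraNneq a2_neq0 => ->; rewrite expr2 mul0r.
rewrite irreducible_AS_shift //.
split=> [-> // | irr_beta]; case: hbeta => // beta0.
by move: irr_beta; rewrite beta0 => /reducible_AS0.
Qed.
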